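(* Let $n\ge 2$ and let $t$ be a (non-plane, unranked) rooted binary tree with $n$ leaves. Then the number of ranked (non-plane) trees with $n$ leaves that map to $t$ when ranks are forgotten is \[ \frac{(n-1)!}{\prod_{u\in\breve V(t)}\lfloor t(u)\rfloor}\;2^{\gimel(t)-s(t)}, \] where $\breve V(t)$ is the set of internal nodes of $t$, $\lfloor t(u)\rfloor$ is the number of internal nodes of the subtree $t(u)$ rooted at $u$, $\gimel(t)$ is the number of cherry nodes of $t$ (internal nodes both of whose children are leaves), and $s(t)$ is the number of internal nodes $v$ whose two child subtrees are isomorphic.
   Context: All trees are finite, rooted and binary (each internal node has exactly two children). An internal ranking of a tree with $n$ leaves is a bijective labeling of its $n-1$ internal nodes by $\{1,\dots,n-1\}$ such that the root has rank $1$ and each internal node has smaller rank than each of its internal descendants. A ranked tree is a (non-plane) tree together with an internal ranking, two ranked trees being identified if there is a rooted-tree isomorphism between them preserving ranks. Forgetting the ranks maps a ranked tree to a tree (up to rooted isomorphism). *)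

From mathcomp Require Import all_boot all_order all_algebra.
Set Implicit Arguments. Unset Strict Implicit. Unset Printing Implicit Defensive.

(* Plane binary trees; non-plane trees are their classes under [isob]. *)
Inductive tree := Leaf | Node of tree & tree.

Fixpoint isob (s t : tree) : bool :=
  match s, t with
  | Leaf, Leaf => true
  | Node a b, Node c d => (isob a c && isob b d) || (isob a d && isob b c)
  | _, _ => false
  end.

Fixpoint leaves (t : tree) : nat :=
  match t with Leaf => 1 | Node a b => leaves a + leaves b end.

Fixpoint internals (t : tree) : nat :=
  match t with Leaf => 0 | Node a b => (internals a + internals b).+1 end.

Fixpoint hook_prod (t : tree) : nat :=
  match t with Leaf => 1 | Node a b => internals t * hook_prod a * hook_prod b end.

Definition is_leaf (t : tree) : bool := if t is Leaf then true else false.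

Fixpoint cherries (t : tree) : nat :=
  match t with
  | Leaf => 0
  | Node a b => (is_leaf a && is_leaf b) + cherries a + cherries b
  end.

Fixpoint sym_nodes (t : tree) : nat :=
  match t with
  | Leaf => 0
  | Node a b => isob a b + sym_nodes a + sym_nodes b
  end.

Inductive rtree := RLeaf | RNode of nat & rtree & rtree.

Fixpoint forget (r : rtree) : tree :=
  match r with RLeaf => Leaf | RNode _ a b => Node (forget a) (forget b) end.

Fixpoint rlabels (r : rtree) : seq nat :=
  match r with RLeaf => [::] | RNode k a b => k :: rlabels a ++ rlabels b end.

Fixpoint heap (r : rtree) : bool :=
  match r with
  | RLeaf => true
  | RNode k a b => all (fun j => k < j) (rlabels a ++ rlabels b) && heap a && heap b
  end.

Definition root_rank_one (r : rtree) : bool :=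
  if r is RNode k _ _ then k == 1 else true.

Definition is_ranking (r : rtree) : bool :=
  [&& perm_eq (rlabels r) (iota 1 (size (rlabels r))), root_rank_one r & heap r].

Fixpoint risob (r s : rtree) : bool :=
  match r, s with
  | RLeaf, RLeaf => true
  | RNode k a b, RNode l c d =>
      (k == l) && ((risob a c && risob b d) || (risob a d && risob b c))
  | _, _ => false
  end.

From HB Require Import structures.
From mathcomp Require Import all_boot all_order all_algebra ring zify.
Set Implicit Arguments. Unset Strict Implicit. Unset Printing Implicit Defensive.

(* A ranking of t whose labels form the sorted list x :: S puts x at the root and
   distributes S between the two children, which are then ranked recursively.
   Recording the labels of each child as a subsequence of S, these choices give
   every ranked tree over t exactly once up to isomorphism, provided that, when
   the two children a and b are isomorphic, the least label of S is always sent
   to a.  Writing |u| for the number of internal nodes, the number g of rankings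
   of the tree with subtrees a and b is thus C(|a|+|b|, |a|) g(a) g(b), the
   binomial being replaced by C(|a|+|b|-1, |a|-1), i.e. by half of it, when a and
   b are isomorphic and not leaves.  Unfolding this recursion with (|a|+|b|+1)! =
   (|a|+|b|+1) C(|a|+|b|, |a|) |a|! |b|! gives
   g(t) * prod_u |t(u)| * 2^s(t) = |t|! * 2^cherries(t). *)

Fixpoint eq_rtree (r s : rtree) : bool :=
  match r, s with
  | RLeaf, RLeaf => true
  | RNode k a b, RNode l c d => [&& k == l, eq_rtree a c & eq_rtree b d]
  | _, _ => false
  end.

Lemma eq_rtreeP : Equality.axiom eq_rtree.
Proof.
elim=> [|k a IHa b IHb] [|l c d] /=; try by constructor.
case: eqP => [<-|nkl]; last by constructor; case.
case: (IHa c) => [<-|nac]; last by constructor; case.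
by case: (IHb d) => [<-|nbd]; constructor; [|case].
Qed.

HB.instance Definition _ := hasDecEq.Build rtree eq_rtreeP.

Lemma isob_sym : symmetric isob.
Proof.
move=> s t; elim: s t => [|a IHa b IHb] [|c d] //=.
by rewrite (IHa c) (IHa d) (IHb c) (IHb d) [isob d a && _]andbC.
Qed.

Lemma isob_trans s t u : isob s t -> isob t u -> isob s u.
Proof.
elim: s t u => [|a IHa b IHb] [|c d] [|e f] //=.
case/orP=> /andP[ac bd] /orP[] /andP[h1 h2].
- by rewrite (IHa _ _ ac h1) (IHb _ _ bd h2).
- by rewrite (IHa _ _ ac h1) (IHb _ _ bd h2) orbT.
- by rewrite (IHa _ _ ac h2) (IHb _ _ bd h1) orbT.
- by rewrite (IHa _ _ ac h2) (IHb _ _ bd h1).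
Qed.

Lemma isob_Node a b c d :
  isob (Node a b) (Node c d) = (isob a c && isob b d) || (isob a d && isob b c).
Proof. by []. Qed.

Lemma isob_internals s t : isob s t -> internals s = internals t.
Proof.
elim: s t => [|a IHa b IHb] [|c d] //=.
by case/orP=> /andP[/IHa-> /IHb->] //; rewrite addnC.
Qed.

Lemma leaves_internals t : leaves t = (internals t).+1.
Proof. by elim: t => //= a -> b ->; rewrite addSn addnS. Qed.

Lemma risob_refl : reflexive risob.
Proof. by elim=> //= k a -> b ->; rewrite eqxx. Qed.

Lemma risob_sym : symmetric risob.
Proof.
move=> r s; elim: r s => [|k a IHa b IHb] [|l c d] //=.
by rewrite (IHa c) (IHa d) (IHb c) (IHb d) [risob d a && _]andbC eq_sym.
Qed.

Lemma risob_Node k a b l c d : risob (RNode k a b) (RNode l c d) =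
  (k == l) && ((risob a c && risob b d) || (risob a d && risob b c)).
Proof. by []. Qed.

Lemma risob_node_swap x c d r : risob (RNode x c d) r = risob (RNode x d c) r.
Proof.
by case: r => //= l e f; rewrite orbC [risob d f && _]andbC [risob d e && _]andbC.
Qed.

Lemma risob_forget r s : risob r s -> isob (forget r) (forget s).
Proof.
elim: r s => [|k a IHa b IHb] [|l c d] //= /andP[_].
by case/orP=> /andP[/IHa-> /IHb->] //; rewrite orbT.
Qed.

Lemma risob_rlabels r s : risob r s -> perm_eq (rlabels r) (rlabels s).
Proof.
elim: r s => [|k a IHa b IHb] [|l c d] //= /andP[/eqP<-].
rewrite perm_cons; case/orP=> /andP[/IHa ac /IHb bd]; first exact: perm_cat.
by rewrite perm_catC; apply: perm_cat.
Qed.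

Lemma size_rlabels r : size (rlabels r) = internals (forget r).
Proof. by elim: r => //= k a IHa b IHb; rewrite size_cat IHa IHb. Qed.

Lemma heap_root_min k c d x S :
  heap (RNode k c d) -> sorted ltn (x :: S) ->
  perm_eq (rlabels (RNode k c d)) (x :: S) -> k = x.
Proof.
move=> /andP[/andP[k_min _] _] /(order_path_min ltn_trans) x_min perm_kx.
have := perm_mem perm_kx x; rewrite !inE eqxx /= => /orP[/eqP-> // | x_below].
have := perm_mem perm_kx k; rewrite !inE eqxx /= => /esym /orP[/eqP // | k_in_S].
by have := ltn_trans (allP x_min _ k_in_S) (allP k_min _ x_below); rewrite ltnn.
Qed.

Lemma is_rankingE r :
  is_ranking r = heap r && perm_eq (rlabels r) (iota 1 (size (rlabels r))).
Proof.
case: r => [|k c d] //=; apply/and3P/andP => [[] | [heap_r perm_r]] //.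
split=> //; apply/eqP; apply: heap_root_min heap_r _ perm_r.
exact: (iota_ltn_sorted 1 _.+1).
Qed.

(** * Splitting a list of labels *)

Section Splits.
Variable T : eqType.
Implicit Types (S : seq T) (P : pred T).

Fixpoint splits S p : seq (seq T * seq T) :=
  match S with
  | [::] => if p is 0 then [:: ([::], [::])] else [::]
  | y :: S' =>
      (if p is p'.+1 then [seq (y :: AB.1, AB.2) | AB <- splits S' p'] else [::])
      ++ [seq (AB.1, y :: AB.2) | AB <- splits S' p]
  end.

Definition splits_head S p :=
  if S is y :: S' then [seq (y :: AB.1, AB.2) | AB <- splits S' p.-1] else splits S p.

Lemma mem_splits S p AB : AB \in splits S p ->
  [/\ subseq AB.1 S, subseq AB.2 S, perm_eq (AB.1 ++ AB.2) S & size AB.1 = p].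
Proof.
elim: S p AB => [|y S IH] p AB /=; first by case: p => // /[!inE] /eqP->.
rewrite mem_cat => /orP[].
  case: p => // p /mapP[[A B] /IH[sA sB pAB sizeA] ->]; split=> //=.
  - by rewrite eqxx.
  - exact: subseq_trans sB (subseq_cons _ _).
  - by rewrite perm_cons.
  - by rewrite sizeA.
case/mapP=> [[A B] /IH[sA sB pAB sizeA] ->]; split=> //=.
- exact: subseq_trans sA (subseq_cons _ _).
- by rewrite eqxx.
- by rewrite -[y :: B]/([:: y] ++ B) perm_catCA /= perm_cons.
Qed.

Lemma mem_splits_head S p AB : AB \in splits_head S p ->
  [/\ subseq AB.1 S, subseq AB.2 S, perm_eq (AB.1 ++ AB.2) S & 0 < p -> size AB.1 = p].
Proof.
case: S => [/mem_splits[-> -> -> ->] // | y S].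
case/mapP=> [[A B] /mem_splits[sA sB pAB sizeA] ->]; split=> //=.
- by rewrite eqxx.
- exact: subseq_trans sB (subseq_cons _ _).
- by rewrite perm_cons.
- by rewrite sizeA => /prednK.
Qed.

Lemma filter_in_splits P S :
  (filter P S, filter (predC P) S) \in splits S (count P S).
Proof.
elim: S => [|y S IH] /=; first by rewrite inE.
rewrite mem_cat; case: (P y) => /=.
  by rewrite add1n (map_f (fun AB => (y :: AB.1, AB.2)) IH).
by rewrite add0n (map_f (fun AB => (AB.1, y :: AB.2)) IH) orbT.
Qed.

Lemma filter_in_splits_head P S : all P (take 1 S) ->
  (filter P S, filter (predC P) S) \in splits_head S (count P S).
Proof.
case: S => [_ | y S]; first exact: filter_in_splits.
rewrite /= take0 andbT => Py; rewrite Py /=.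
exact: (map_f (fun AB => (y :: AB.1, AB.2)) (filter_in_splits P S)).
Qed.

Lemma uniq_splits S p : uniq S -> uniq (splits S p).
Proof.
have inj_fst y : injective (fun AB : seq T * seq T => (y :: AB.1, AB.2)).
  by move=> [A B] [C D] [-> ->].
have inj_snd y : injective (fun AB : seq T * seq T => (AB.1, y :: AB.2)).
  by move=> [A B] [C D] [-> ->].
elim: S p => [|y S IH] p /=; first by case: p.
case/andP=> yS uS; rewrite cat_uniq (map_inj_uniq (inj_snd y)) IH // andbT.
case: p => [|p] /=; first by apply/hasP => -[].
rewrite (map_inj_uniq (inj_fst y)) IH //=.
apply/hasP => -[_ /mapP[[A B] /mem_splits[sA _ _ _] ->]] /mapP[[C D] _ /= [yA _]].
by move: sA; rewrite yA => /mem_subseq/(_ y (mem_head _ _)); apply/negP.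
Qed.

Lemma uniq_splits_head S p : uniq S -> uniq (splits_head S p).
Proof.
case: S => [|y S /andP[_ uS]]; first exact: uniq_splits.
by rewrite map_inj_uniq ?uniq_splits // => -[A B] [C D] [-> ->].
Qed.

Lemma size_splits S p : size (splits S p) = 'C(size S, p).
Proof.
elim: S p => [|y S IH] [|p] //=.
  by rewrite size_map IH !bin0.
by rewrite size_cat !size_map !IH binS addnC.
Qed.

End Splits.

(* When [a] and [b] are isomorphic the least label is forced into the left child;
   otherwise every ranked tree would also be produced with its children swapped. *)
Definition child_splits (a b : tree) (S : seq nat) :=
  if isob a b then splits_head S (internals a) else splits S (internals a).

Definition nchild_splits (a b : tree) :=
  if isob a b then 'C((internals a + internals b).-1, (internals a).-1)
  else 'C(internals a + internals b, internals a).

Lemma mem_child_splits a b S AB : AB \in child_splits a b S ->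
  [/\ subseq AB.1 S, subseq AB.2 S & perm_eq (AB.1 ++ AB.2) S].
Proof. by rewrite /child_splits; case: isob => [/mem_splits_head|/mem_splits] []. Qed.

Lemma size_mem_child_splits a b S AB :
  size S = internals a + internals b -> AB \in child_splits a b S ->
  size AB.1 = internals a /\ size AB.2 = internals b.
Proof.
move=> size_S AB_in; have [_ _ /perm_size] := mem_child_splits AB_in.
rewrite size_cat size_S => size_AB; suff: size AB.1 = internals a by lia.
move: AB_in; rewrite /child_splits; case: ifP => [iab | _ /mem_splits[] //].
have := isob_internals iab.
case: (posnP (internals a)) => [ia0 ia_ib _ | ia_gt0 _]; first by lia.
by case/mem_splits_head=> _ _ _ ->.
Qed.

Lemma size_child_splits a b S : size S = internals a + internals b ->
  size (child_splits a b S) = nchild_splits a b.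
Proof.
rewrite /child_splits /nchild_splits; case: ifP => _ size_S; last first.
  by rewrite size_splits size_S.
case: S size_S => [|y S] size_S; last by rewrite size_map size_splits -size_S.
have ia0 : internals a = 0 by move: size_S => /=; lia.
by rewrite size_splits -size_S ia0.
Qed.

Lemma uniq_child_splits a b S : uniq S -> uniq (child_splits a b S).
Proof.
by rewrite /child_splits; case: isob; [apply: uniq_splits_head | apply: uniq_splits].
Qed.

Lemma filter_in_child_splits a b (P : pred nat) S :
  count P S = internals a -> (isob a b -> all P (take 1 S)) ->
  (filter P S, filter (predC P) S) \in child_splits a b S.
Proof.
move=> count_P head_P; rewrite /child_splits -count_P; case: ifP => [/head_P | _].
  exact: filter_in_splits_head.
exact: filter_in_splits.
Qed.

(** * Enumerating the rankings of a tree *)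

Fixpoint rankings (t : tree) (S : seq nat) : seq rtree :=
  match t, S with
  | Leaf, [::] => [:: RLeaf]
  | Node a b, x :: S' =>
      flatten [seq [seq RNode x c d | c <- rankings a AB.1, d <- rankings b AB.2]
              | AB <- child_splits a b S']
  | _, _ => [::]
  end.

Fixpoint ranking_count (t : tree) : nat :=
  if t is Node a b then nchild_splits a b * ranking_count a * ranking_count b else 1.

Lemma rankings_nodeP a b x S r :
  reflect (exists AB c d, [/\ AB \in child_splits a b S, c \in rankings a AB.1,
                              d \in rankings b AB.2 & r = RNode x c d])
          (r \in rankings (Node a b) (x :: S)).
Proof.
apply: (iffP flatten_mapP) => [[AB AB_in /allpairsP[[c d] [/= c_in d_in ->]]] |].
  by exists AB, c, d.
by case=> AB [c [d [AB_in c_in d_in ->]]]; exists AB => //; apply: allpairs_f.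
Qed.

Lemma rankings_nil t r : r \in rankings t [::] -> r = RLeaf.
Proof. by case: t => [|a b] //=; rewrite inE => /eqP. Qed.

Lemma rankings_sound t S r : sorted ltn S -> r \in rankings t S ->
  [/\ perm_eq (rlabels r) S, heap r & isob (forget r) t].
Proof.
elim: t S r => [|a IHa b IHb] [|x S] r //; first by rewrite inE => _ /eqP->.
move=> sorted_xS /rankings_nodeP[AB [c [d [AB_in c_in d_in ->]]]] /=.
have sorted_S := path_sorted sorted_xS.
have [sub_A sub_B perm_AB] := mem_child_splits AB_in.
have [perm_c heap_c iso_c] := IHa _ _ (subseq_sorted ltn_trans sub_A sorted_S) c_in.
have [perm_d heap_d iso_d] := IHb _ _ (subseq_sorted ltn_trans sub_B sorted_S) d_in.
have perm_cd := perm_trans (perm_cat perm_c perm_d) perm_AB.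
rewrite perm_cons perm_cd heap_c heap_d iso_c iso_d (perm_all _ perm_cd).
by rewrite (order_path_min ltn_trans sorted_xS).
Qed.

Lemma perm_filter_mem (T : eqType) (s1 s2 S : seq T) :
  perm_eq (s1 ++ s2) S -> uniq S ->
  perm_eq s1 (filter (mem s1) S) /\ perm_eq s2 (filter (predC (mem s1)) S).
Proof.
move=> perm_S uniq_S; have := uniq_S.
rewrite -(perm_uniq perm_S) cat_uniq => /and3P[uniq_s1 /hasPn disj uniq_s2].
split; apply: uniq_perm; rewrite ?filter_uniq //.
all: move=> z; rewrite mem_filter -(perm_mem perm_S) mem_cat /=.
  by case: (z \in s1).
by case s2z: (z \in s2); [rewrite (disj _ s2z) orbT | rewrite orbF andNb].
Qed.

Section NodeCompleteness.

Variables a b : tree.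
Hypothesis complete_a : forall S r, sorted ltn S -> heap r -> perm_eq (rlabels r) S ->
  isob (forget r) a -> has (risob r) (rankings a S).
Hypothesis complete_b : forall S r, sorted ltn S -> heap r -> perm_eq (rlabels r) S ->
  isob (forget r) b -> has (risob r) (rankings b S).

Lemma has_risob_oriented x S c d :
  sorted ltn S -> heap c -> heap d -> perm_eq (rlabels c ++ rlabels d) S ->
  isob (forget c) a -> isob (forget d) b ->
  (isob a b -> all (mem (rlabels c)) (take 1 S)) ->
  has (risob (RNode x c d)) (rankings (Node a b) (x :: S)).
Proof.
move=> sorted_S heap_c heap_d perm_cd iso_c iso_d head_c.
have [perm_c perm_d] := perm_filter_mem perm_cd (sorted_uniq ltn_trans ltnn sorted_S).
have /hasP[c' c'_in risob_c] :=
  complete_a (sorted_filter ltn_trans _ sorted_S) heap_c perm_c iso_c.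
have /hasP[d' d'_in risob_d] :=
  complete_b (sorted_filter ltn_trans _ sorted_S) heap_d perm_d iso_d.
have count_c : count (mem (rlabels c)) S = internals a.
  by rewrite -size_filter -(perm_size perm_c) size_rlabels (isob_internals iso_c).
apply/hasP; exists (RNode x c' d'); last by rewrite /= eqxx risob_c risob_d.
apply/rankings_nodeP.
exists (filter (mem (rlabels c)) S, filter (predC (mem (rlabels c))) S), c', d'.
by split=> //; apply: filter_in_child_splits.
Qed.

Lemma has_risob_node x S c d :
  sorted ltn S -> heap c -> heap d -> perm_eq (rlabels c ++ rlabels d) S ->
  isob (Node (forget c) (forget d)) (Node a b) ->
  has (risob (RNode x c d)) (rankings (Node a b) (x :: S)).
Proof.
move=> sorted_S; wlog /andP[iso_c iso_d] : c d / isob (forget c) a && isob (forget d) b.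
  move=> oriented heap_c heap_d perm_cd iso_cd.
  move: (iso_cd); rewrite isob_Node => /orP[iso_cd' | /andP[iso_cb iso_da]].
    exact: oriented iso_cd' heap_c heap_d perm_cd iso_cd.
  rewrite (eq_has (risob_node_swap x c d)).
  apply: (oriented d c) => //; first by rewrite iso_da iso_cb.
    by rewrite perm_catC.
  by rewrite isob_Node iso_da iso_cb.
move=> heap_c heap_d perm_cd _.
case iab : (isob a b); last by apply: has_risob_oriented => //; rewrite iab.
case: S sorted_S perm_cd => [|y S] sorted_S perm_cd; first exact: has_risob_oriented.
case y_c : (y \in rlabels c).
  by apply: has_risob_oriented => // _; rewrite /= take0 y_c.
have y_d : y \in rlabels d.
  by have := perm_mem perm_cd y; rewrite mem_cat y_c inE eqxx.
rewrite (eq_has (risob_node_swap x c d)); apply: has_risob_oriented => //.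
- by rewrite perm_catC.
- by apply: isob_trans iso_d _; rewrite isob_sym.
- exact: isob_trans iso_c iab.
- by rewrite /= take0 y_d.
Qed.

End NodeCompleteness.

Lemma rankings_complete t S r :
  sorted ltn S -> heap r -> perm_eq (rlabels r) S -> isob (forget r) t ->
  has (risob r) (rankings t S).
Proof.
elim: t S r => [|a IHa b IHb] S [|k c d] //.
  by move=> _ _ /perm_size; case: S.
case: S => [_ _ /perm_size // | x S sorted_xS heap_r perm_r].
have k_x := heap_root_min heap_r sorted_xS perm_r; subst k.
move: heap_r perm_r => /andP[/andP[_ heap_c] heap_d]; rewrite perm_cons => perm_cd.
exact: has_risob_node (path_sorted sorted_xS) heap_c heap_d perm_cd.
Qed.

(* If [a] and [b] are isomorphic, every left child carries the least label of [S]
   and no right child does. *)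
Lemma rankings_cross a b S AB AB' c d :
  sorted ltn S -> AB \in child_splits a b S -> AB' \in child_splits a b S ->
  c \in rankings a AB.1 -> d \in rankings b AB'.2 -> risob c d ->
  AB.1 = [::] /\ AB'.2 = [::].
Proof.
move=> sorted_S AB_in AB'_in c_in d_in risob_cd.
have [sub_A _ _] := mem_child_splits AB_in.
have [_ sub_B' _] := mem_child_splits AB'_in.
have [perm_c _ iso_c] := rankings_sound (subseq_sorted ltn_trans sub_A sorted_S) c_in.
have [perm_d _ iso_d] := rankings_sound (subseq_sorted ltn_trans sub_B' sorted_S) d_in.
have iab : isob a b.
  rewrite isob_sym in iso_c.
  exact: isob_trans iso_c (isob_trans (risob_forget risob_cd) iso_d).
move: AB_in AB'_in perm_c perm_d; rewrite /child_splits iab.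
case: S sorted_S {sub_A sub_B'} => [_ /mem_splits[+ _ _ _] /mem_splits[_ + _ _] | y S].
  by rewrite !subseq0 => /eqP-> /eqP->.
move=> /(sorted_uniq ltn_trans ltnn) /andP[y_S _].
case/mapP=> [[A B] _ ->] /mapP[[A' B'] /mem_splits[_ sub_B' _ _] ->] /= perm_c perm_d.
have : y \in rlabels d.
  by rewrite -(perm_mem (risob_rlabels risob_cd)) (perm_mem perm_c) mem_head.
by rewrite (perm_mem perm_d) => /(mem_subseq sub_B'); rewrite (negbTE y_S).
Qed.

Lemma risob_sorted_rlabels r r' s s' :
  risob r r' -> perm_eq (rlabels r) s -> perm_eq (rlabels r') s' ->
  sorted ltn s -> sorted ltn s' -> s = s'.
Proof.
move=> risob_r perm_r perm_r' sorted_s sorted_s'.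
apply: (irr_sorted_eq ltn_trans ltnn sorted_s sorted_s') => z.
by rewrite -(perm_mem perm_r) -(perm_mem perm_r') (perm_mem (risob_rlabels risob_r)).
Qed.

Lemma risob_rankings_node a b x S A B A' B' c d c' d' :
  sorted ltn S -> (A, B) \in child_splits a b S -> (A', B') \in child_splits a b S ->
  c \in rankings a A -> d \in rankings b B ->
  c' \in rankings a A' -> d' \in rankings b B' ->
  risob (RNode x c d) (RNode x c' d') -> [/\ A = A', B = B', risob c c' & risob d d'].
Proof.
move=> sorted_S AB_in AB'_in c_in d_in c'_in d'_in; rewrite risob_Node eqxx /=.
have labels A0 B0 c0 d0 : (A0, B0) \in child_splits a b S ->
    c0 \in rankings a A0 -> d0 \in rankings b B0 ->
    [/\ perm_eq (rlabels c0) A0, perm_eq (rlabels d0) B0, sorted ltn A0 & sorted ltn B0].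
  move=> AB0_in c0_in d0_in; have [sub_A sub_B _] := mem_child_splits AB0_in.
  have sorted_A := subseq_sorted ltn_trans sub_A sorted_S.
  have sorted_B := subseq_sorted ltn_trans sub_B sorted_S.
  have [perm_c _ _] := rankings_sound sorted_A c0_in.
  by have [perm_d _ _] := rankings_sound sorted_B d0_in.
have [perm_c perm_d sorted_A sorted_B] := labels _ _ _ _ AB_in c_in d_in.
have [perm_c' perm_d' sorted_A' sorted_B'] := labels _ _ _ _ AB'_in c'_in d'_in.
case/orP=> /andP[risob_1 risob_2].
  have eA := risob_sorted_rlabels risob_1 perm_c perm_c' sorted_A sorted_A'.
  by have eB := risob_sorted_rlabels risob_2 perm_d perm_d' sorted_B sorted_B'.
have [/= A0 B'0] := rankings_cross sorted_S AB_in AB'_in c_in d'_in risob_1.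
rewrite risob_sym in risob_2.
have [/= A'0 B0] := rankings_cross sorted_S AB'_in AB_in c'_in d_in risob_2.
move: c_in d_in c'_in d'_in; rewrite A0 B0 A'0 B'0.
by move=> /rankings_nil-> /rankings_nil-> /rankings_nil-> /rankings_nil->.
Qed.

Lemma flatten_map_uniq (I T : eqType) (f : I -> seq T) (s : seq I) :
  uniq s -> {in s, forall i, uniq (f i)} ->
  {in s &, forall i j x, x \in f i -> x \in f j -> i = j} ->
  uniq (flatten (map f s)).
Proof.
elim: s => //= i s IH /andP[i_s uniq_s] uniq_f disj.
rewrite cat_uniq uniq_f ?mem_head //= IH //; first last.
- by move=> j k j_s k_s; apply: disj; rewrite inE ?j_s ?k_s orbT.
- by move=> j j_s; apply: uniq_f; rewrite inE j_s orbT.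
rewrite andbT; apply/hasP => -[x /flatten_mapP[j j_s x_j] x_i].
have ij : i = j by apply: (disj i j _ _ x x_i x_j); rewrite inE ?eqxx ?j_s ?orbT.
by rewrite ij j_s in i_s.
Qed.

Lemma rankings_uniq t S : sorted ltn S -> uniq (rankings t S).
Proof.
elim: t S => [|a IHa b IHb] [|x S] //= sorted_xS.
have sorted_S := path_sorted sorted_xS.
apply: flatten_map_uniq.
- exact/uniq_child_splits/(sorted_uniq ltn_trans ltnn sorted_S).
- move=> [A B] /mem_child_splits[sub_A sub_B _].
  apply: allpairs_uniq; last by move=> [c d] [c' d'] _ _ [-> ->].
    exact: IHa (subseq_sorted ltn_trans sub_A sorted_S).
  exact: IHb (subseq_sorted ltn_trans sub_B sorted_S).
move=> [A B] [A' B'] AB_in AB'_in r.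
case/allpairsP=> [[c d] [/= c_in d_in ->]] /allpairsP[[c' d'] [/= c'_in d'_in eq_r]].
have := risob_rankings_node (x := x) sorted_S AB_in AB'_in c_in d_in c'_in d'_in.
by rewrite eq_r risob_refl => /(_ isT)[-> -> _ _].
Qed.

Lemma rankings_risob_eq t S : sorted ltn S ->
  {in rankings t S &, forall r r', risob r r' -> r = r'}.
Proof.
elim: t S => [|a IHa b IHb] [|x S] sorted_xS r r' //.
  by rewrite !inE => /eqP-> /eqP->.
case/rankings_nodeP=> [[A B] [c [d [AB_in c_in d_in ->]]]].
case/rankings_nodeP=> [[A' B'] [c' [d' [AB'_in c'_in d'_in ->]]]] risob_r.
have sorted_S := path_sorted sorted_xS.
have [eA eB risob_c risob_d] :=
  risob_rankings_node sorted_S AB_in AB'_in c_in d_in c'_in d'_in risob_r.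
subst A' B'.
have [sub_A sub_B _] := mem_child_splits AB_in.
rewrite (IHa _ (subseq_sorted ltn_trans sub_A sorted_S) c c') //.
by rewrite (IHb _ (subseq_sorted ltn_trans sub_B sorted_S) d d').
Qed.

Lemma rankings_pairwise t S : sorted ltn S ->
  pairwise (fun r r' => ~~ risob r r') (rankings t S).
Proof.
move=> sorted_S; have := rankings_uniq t sorted_S; rewrite uniq_pairwise.
apply: (sub_in_pairwise (P := mem (rankings t S))); last exact/allP.
move=> r r' r_in r'_in /=; apply: contra => risob_r.
by rewrite (rankings_risob_eq sorted_S r_in r'_in risob_r).
Qed.

Lemma size_rankings t S : size S = internals t -> size (rankings t S) = ranking_count t.
Proof.
elim: t S => [|a IHa b IHb] [|x S] //= [size_S].
set k := ranking_count a * ranking_count b.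
set blocks := map _ (child_splits a b S).
rewrite size_flatten; have /all_pred1P-> : all (pred1 k) (shape blocks).
  apply/allP => _ /mapP[_ /mapP[AB AB_in ->] ->] /=.
  have [size_A size_B] := size_mem_child_splits size_S AB_in.
  by rewrite size_allpairs IHa ?IHb.
by rewrite sumn_nseq !size_map size_child_splits // mulnC mulnA.
Qed.

Lemma bin_odd_double m : 'C(m + m.+1, m) * 2 = 'C(m.+1 + m.+1, m.+1).
Proof.
by rewrite addSn binS -(bin_sub (leq_addl m m.+1)) addnK muln2 -addnn.
Qed.

(* For a cherry there is no label left to split, so the symmetry costs no factor 2. *)
Lemma nchild_splits_sym a b :
  nchild_splits a b * 2 ^ isob a b =
  'C(internals a + internals b, internals a) * 2 ^ (is_leaf a && is_leaf b).
Proof.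
rewrite /nchild_splits; case: ifP => iab; last by case: a b iab => [|? ?] [|? ?].
rewrite -(isob_internals iab); case: a iab => [|a1 a2] /=; first by case: b.
by rewrite addSn bin_odd_double muln1.
Qed.

Lemma ranking_count_hook t :
  ranking_count t * hook_prod t * 2 ^ sym_nodes t = (internals t)`! * 2 ^ cherries t.
Proof.
elim: t => [|a IHa b IHb] //=.
have fact_ab : (internals a + internals b)`! =
    'C(internals a + internals b, internals a) * ((internals a)`! * (internals b)`!).
  by rewrite -(bin_fact (leq_addr (internals b) (internals a))) addKn.
rewrite !expnD factS fact_ab.
transitivity (nchild_splits a b * 2 ^ isob a b * (internals a + internals b).+1 *
  (ranking_count a * hook_prod a * 2 ^ sym_nodes a) *
  (ranking_count b * hook_prod b * 2 ^ sym_nodes b)); first ring.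
rewrite nchild_splits_sym IHa IHb; ring.
Qed.

Lemma hook_prod_gt0 t : 0 < hook_prod t.
Proof. by elim: t => //= a IHa b IHb; rewrite !muln_gt0 IHa IHb. Qed.

Import GRing.Theory Num.Theory.
Local Open Scope ring_scope.

Lemma ranking_countE (R : numFieldType) t :
  (ranking_count t)%:R = ((internals t)`!)%:R / (hook_prod t)%:R
                         * (2 : R) ^ ((cherries t)%:Z - (sym_nodes t)%:Z).
Proof.
have hook_neq0 : (hook_prod t)%:R != 0 :> R by rewrite pnatr_eq0 -lt0n hook_prod_gt0.
have pow2_neq0 : (2 : R) ^+ sym_nodes t != 0 by rewrite expf_neq0 ?pnatr_eq0.
apply: (mulIf (mulf_neq0 hook_neq0 pow2_neq0)).
rewrite mulrA -natrM -natrX -natrM ranking_count_hook natrM !natrX.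
rewrite expfzDr ?pnatr_eq0 // -invr_expz -!exprnP.
by field; rewrite pow2_neq0 hook_neq0.
Qed.

Unset Implicit Arguments.

Theorem lemma2p4 (n : nat) (t : tree) :
  (2 <= n)%N -> leaves t = n ->
  exists L : seq rtree,
    [/\ all (fun r => is_ranking r && isob (forget r) t) L,
        (forall r : rtree, is_ranking r -> isob (forget r) t -> has (risob r) L),
        pairwise (fun r1 r2 => ~~ risob r1 r2) L &
        (size L)%:R = ((n.-1)`!)%:R / (hook_prod t)%:R
                      * (2 : rat) ^ ((cherries t)%:Z - (sym_nodes t)%:Z)].
Proof.
move=> _ <-; rewrite leaves_internals /=.
have sorted_iota : sorted ltn (iota 1 (internals t)) := iota_ltn_sorted 1 _.
exists (rankings t (iota 1 (internals t))); split.
- apply/allP => r /(rankings_sound sorted_iota) [perm_r heap_r iso_r].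
  by rewrite is_rankingE heap_r iso_r (perm_size perm_r) size_iota perm_r.
- move=> r; rewrite is_rankingE size_rlabels => /andP[heap_r perm_r] iso_r.
  by apply: rankings_complete; rewrite // -(isob_internals iso_r).
- exact: rankings_pairwise.
- by rewrite size_rankings ?size_iota // ranking_countE.
Qed.
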